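(* Let $1\le s\le d$ and let $J\subseteq J_{\mathbb C}$. Then $J\in\mathcal J(s,\mathbb C)$ if and only if there exist $V\in\mathcal G(s,d)$ and a block column echelon basis $W$ of $V$ (with data $r$, $b_1,\dots,b_r$, $k_1<\dots<k_r$) such that $$\{k_j+1:\ j\in\{1,\dots,r\},\ b_j=1,\ d_{k_j+1}=2\}=J.$$
   Context: Fix $d_1,\dots,d_k\in\{1,2\}$ with $d=d_1+\dots+d_k$ and let $J_{\mathbb C}=\{j\in\{1,\dots,k\}:d_j=2\}$. Define $\mathcal J(s,\mathbb C)=\{J\subseteq J_{\mathbb C}:\ |J|\le\min(s,d-s),\ \text{and } s-|J| \text{ is even if } |J_{\mathbb C}|=k\}$. Block column echelon basis: the rows of $W\in\mathbb R^{d\times s}$ are partitioned into consecutive blocks of sizes $d_1,\dots,d_k$. A block column echelon basis of $V\in\mathcal G(s,d)$ is a $W\in\mathbb R^{d\times s}$ with $\mathrm{range}(W)=V$ whose columns are partitioned into consecutive groups of sizes $b_1,\dots,b_r\in\{1,2\}$, $\sum_jb_j=s$, such that, writing $W_{ij}\in\mathbb R^{d_i\times b_j}$ for the resulting blocks, there are indices $0\le k_1<\dots<k_r<k$ with $W_{ij}=0$ for $i\le k_j$ and $\mathrm{rank}(W_{k_j+1,j})=b_j$ (so $b_j=1$ whenever $d_{k_j+1}=1$). $\mathcal G(s,d)$ is the Grassmannian of $s$-dimensional subspaces of $\mathbb R^d$. *)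

(* Blocks and column groups are indexed from 0 (paper: from 1). *)
From HB Require Import structures.
From mathcomp Require Import all_boot all_order all_algebra.
From mathcomp Require Import reals.
Set Implicit Arguments. Unset Strict Implicit. Unset Printing Implicit Defensive.
Import Order.TTheory GRing.Theory Num.Theory.
Local Open Scope ring_scope.

Section Defs.
Variable R : realType.

Definition dtot (k : nat) (dd : 'I_k -> nat) : nat := (\sum_(i < k) dd i)%N.

Definition JC (k : nat) (dd : 'I_k -> nat) : {set 'I_k} := [set i | dd i == 2%N].

Definition calJ (k : nat) (dd : 'I_k -> nat) (s : nat) (J : {set 'I_k}) : bool :=
  [&& J \subset JC dd,
      (#|J| <= minn s (dtot dd - s))%N
    & (#|JC dd| == k) ==> ~~ odd (s - #|J|)].

Definition roff (k : nat) (dd : 'I_k -> nat) (i : nat) : nat :=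
  (\sum_(l < k | (l < i)%N) dd l)%N.
Definition coff (r : nat) (bb : 'I_r -> nat) (j : nat) : nat :=
  (\sum_(l < r | (l < j)%N) bb l)%N.

(* entry (x,y) of W, 0 outside the matrix *)
Definition mxentry (m n : nat) (W : 'M[R]_(m, n)) (x y : nat) : R :=
  match insub x, insub y with
  | Some x', Some y' => W x' y'
  | _, _ => 0
  end.

Definition bce_block (k : nat) (dd : 'I_k -> nat) (s r : nat) (bb : 'I_r -> nat)
    (W : 'M[R]_(dtot dd, s)) (i : 'I_k) (j : 'I_r) : 'M[R]_(dd i, bb j) :=
  \matrix_(a < dd i, c < bb j) mxentry W (roff dd i + a) (coff bb j + c).

(* W is in block column echelon form with data r, b_1..b_r, k_1<..<k_r
   (kk j is the 0-based index of block k_j+1, i.e. kk j = k_j) *)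
Definition is_bce (k : nat) (dd : 'I_k -> nat) (s : nat) (W : 'M[R]_(dtot dd, s))
    (r : nat) (bb : 'I_r -> nat) (kk : 'I_r -> 'I_k) : Prop :=
  [/\ forall j, bb j = 1%N \/ bb j = 2%N,
      (\sum_(j < r) bb j)%N = s,
      forall j1 j2 : 'I_r, (j1 < j2)%N -> (kk j1 < kk j2)%N,
      forall (j : 'I_r) (i : 'I_k), (i < kk j)%N -> bce_block bb W i j = 0
    & forall j : 'I_r, \rank (bce_block bb W (kk j) j) = bb j].

End Defs.

(* The leading blocks k_1 < ... < k_r of a block column echelon
   basis are distinct, so |J| counts the column groups j with b_j = 1 and
   d_{k_j+1} = 2.  Such a group contributes 1 <= b_j to s, and every group
   satisfies b_j + [j counted] <= d_{k_j+1} (the leading block has rank b_j);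
   summing over the distinct leading blocks gives |J| <= s and s + |J| <= d.
   If all blocks are complex, every uncounted group has width 2, hence
   s - |J| is even.

   Arithmetic on the number of real blocks, of complex blocks
   and of |J| gives a <= #real blocks and b <= |J_C \ J| with
   |J| + a + 2b = s.  Choosing A real blocks and B complex blocks outside J
   of these sizes, the blocks P = J u A u B, listed increasingly, with
   widths 2 on B and 1 elsewhere, are the data of a "selection matrix": its
   c-th column in group j is the unit vector of the c-th row of the leading
   block of j.  Its leading blocks are partial identities, the blocks above
   them vanish, and W^T W = 1 gives full column rank. *)
From HB Require Import structures.
From mathcomp Require Import all_boot all_order all_algebra.
From mathcomp Require Import reals.
From mathcomp Require Import zify.
Import Order.TTheory GRing.Theory Num.Theory.
Set Implicit Arguments. Unset Strict Implicit. Unset Printing Implicit Defensive.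
Local Open Scope ring_scope.

Section Offsets.
Variables (n : nat) (w : 'I_n -> nat).
Local Notation off i := (\sum_(l < n | (l < i)%N) w l)%N.

Lemma off_S (i : 'I_n) : off i.+1 = (off i + w i)%N.
Proof.
rewrite (bigD1 i) ?ltnSn //= addnC; congr (_ + _)%N.
by apply: eq_bigl => l; rewrite ltnS -val_eqE /=; case: ltngtP.
Qed.

Lemma off_mono (i j : nat) : (i <= j)%N -> (off i <= off j)%N.
Proof.
move=> le_ij; rewrite [X in (X <= _)%N]big_mkcond [X in (_ <= X)%N]big_mkcond.
apply: leq_sum => l _; case: ifP => li; case: ifP => lj //.
by move: lj; rewrite (leq_trans li le_ij).
Qed.

Lemma off_all : off n = (\sum_(l < n) w l)%N.
Proof. by apply: eq_bigl => l; rewrite ltn_ord. Qed.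

Lemma off_lt (i : 'I_n) (j : nat) a : (i < j)%N -> (a < w i)%N -> (off i + a < off j)%N.
Proof.
move=> lt_ij lt_a; apply: (@leq_trans (off i.+1)); last exact: off_mono.
by rewrite off_S ltn_add2l.
Qed.

Lemma off_lt_tot (i : 'I_n) a : (a < w i)%N -> (off i + a < \sum_(l < n) w l)%N.
Proof. by rewrite -off_all; apply: off_lt. Qed.

Lemma off_inj (i j : 'I_n) a b : (a < w i)%N -> (b < w j)%N ->
  (off i + a = off j + b)%N -> i = j /\ a = b.
Proof.
move=> lt_a lt_b e.
have ij : i = j.
  apply/val_inj; case: (ltngtP i j) => // lt_ij.
  - by have := off_lt lt_ij lt_a; rewrite e; lia.
  - by have := off_lt lt_ij lt_b; rewrite -e; lia.
by subst j; split=> //; lia.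
Qed.

Lemma off_ex y : (y < \sum_(l < n) w l)%N ->
  exists j : 'I_n, (off j <= y < off j + w j)%N.
Proof.
move=> lt_y.
have exP : exists m, (y < off m)%N by exists n; rewrite off_all.
case: (ex_minnP exP) => m y_lt_m min_m.
case: m y_lt_m min_m => [|j] y_lt_m min_m; first by move: y_lt_m; rewrite big_pred0.
have lt_jn : (j < n)%N.
  rewrite ltnNge; apply/negP => le_nj.
  by have := min_m n; rewrite off_all => /(_ lt_y); lia.
exists (Ordinal lt_jn) => /=.
rewrite -(off_S (Ordinal lt_jn)) y_lt_m andbT leqNgt; apply/negP => y_lt.
by have := min_m j y_lt; lia.
Qed.

End Offsets.

Lemma mxentryE (R : realType) m n (W : 'M[R]_(m, n)) x y
    (lt_x : (x < m)%N) (lt_y : (y < n)%N) :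
  mxentry W x y = W (Ordinal lt_x) (Ordinal lt_y).
Proof.
rewrite /mxentry; case: insubP => [x' _ ex|]; last by rewrite lt_x.
by case: insubP => [y' _ ey|]; [congr (W _ _); apply/val_inj | rewrite lt_y].
Qed.

Lemma incr_inj m n (f : 'I_m -> 'I_n) :
  (forall j1 j2 : 'I_m, (j1 < j2)%N -> (f j1 < f j2)%N) -> injective f.
Proof.
move=> f_incr j1 j2 e; apply/val_inj.
by case: (ltngtP j1 j2) => // lt; have := f_incr _ _ lt; rewrite e ltnn.
Qed.

Lemma JC_full k (dd : 'I_k -> nat) : #|JC dd| = k -> forall i, dd i = 2%N.
Proof.
move=> cardJC i; have : i \in JC dd.
  have -> : JC dd = setT by apply/eqP; rewrite eqEcard subsetT cardsT card_ord cardJC leqnn.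
  exact: in_setT.
by rewrite inE => /eqP.
Qed.

Section Necessity.
Variables (R : realType) (k : nat) (dd : 'I_k -> nat) (s : nat).
Variables (W : 'M[R]_(dtot dd, s)) (r : nat) (bb : 'I_r -> nat) (kk : 'I_r -> 'I_k).
Hypothesis dd12 : forall i, dd i = 1%N \/ dd i = 2%N.
Hypothesis bceW : is_bce W bb kk.

Local Notation cplx j := ((bb j == 1%N) && (dd (kk j) == 2%N)).

Lemma bce_widths j : bb j = 1%N \/ bb j = 2%N.
Proof. by case: bceW. Qed.

Lemma bce_sum : (\sum_j bb j)%N = s.
Proof. by case: bceW. Qed.

Lemma bce_inj : injective kk.
Proof. by case: bceW => _ _ incr _ _; apply: incr_inj. Qed.

(* the leading block of group j has rank b_j, so b_j <= d_{k_j+1} *)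
Lemma bce_width_le j : (bb j <= dd (kk j))%N.
Proof. by case: bceW => _ _ _ _ rk; rewrite -rk rank_leq_row. Qed.

Lemma bce_card_cplx :
  #|[set kk j | j : 'I_r & cplx j]| = (\sum_j (cplx j : nat))%N.
Proof.
rewrite card_imset; last exact: bce_inj.
rewrite -sum1_card big_mkcond /=; apply: eq_bigr => j _.
by rewrite !inE; case: (_ && _).
Qed.

Lemma bce_cplx_le_s : (\sum_j (cplx j : nat) <= s)%N.
Proof.
rewrite -bce_sum; apply: leq_sum => j _.
by case: (bce_widths j) => ->; case: (_ && _).
Qed.

(* each group and its counting bit fit into its leading block, and the
   leading blocks are distinct *)
Lemma bce_s_cplx_le_d : (s + \sum_j (cplx j : nat) <= dtot dd)%N.
Proof.
rewrite -bce_sum -big_split /=.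
apply: (@leq_trans (\sum_j dd (kk j))%N).
  apply: leq_sum => j _; move: (bce_width_le j).
  by case: (bce_widths j) => ->; case: (dd12 (kk j)) => ->.
rewrite /dtot -(big_imset _ (in2W bce_inj)) /=.
by rewrite [leqRHS](bigID (mem [set kk j | j in xpredT])) leq_addr.
Qed.

(* with only complex blocks the uncounted groups have width 2 *)
Lemma bce_parity : (forall i, dd i = 2%N) -> ~~ odd (s - \sum_j (cplx j : nat)).
Proof.
move=> all2; rewrite -bce_sum.
have -> : (\sum_j bb j = \sum_j (cplx j : nat) + \sum_j ((bb j != 1%N) * 2))%N.
  rewrite -big_split; apply: eq_bigr => j _ /=.
  by rewrite all2; case: (bce_widths j) => ->.
by rewrite addKn -dvdn2; apply: dvdn_sum => j _; apply: dvdn_mull.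
Qed.

Lemma bce_calJ : calJ dd s [set kk j | j : 'I_r & cplx j].
Proof.
have le_d := bce_s_cplx_le_d.
apply/and3P; split.
- apply/subsetP => x /imsetP[j]; rewrite inE => /andP[_ dd2] ->.
  by rewrite inE.
- rewrite bce_card_cplx leq_min bce_cplx_le_s leq_subRL //.
  exact: leq_trans (leq_addr _ _) le_d.
- by apply/implyP => /eqP /JC_full all2; rewrite bce_card_cplx bce_parity.
Qed.

End Necessity.

(* The selection matrix attached to increasing leading blocks kk and
   widths bb: column c of group j is the unit vector of row c of block kk j. *)
Section Selection.
Variables (R : realType) (k : nat) (dd : 'I_k -> nat) (s r : nat).
Variables (bb : 'I_r -> nat) (kk : 'I_r -> 'I_k).
Hypothesis kk_incr : forall j1 j2 : 'I_r, (j1 < j2)%N -> (kk j1 < kk j2)%N.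
Hypothesis bb_le : forall j, (bb j <= dd (kk j))%N.
Hypothesis bb_sum : (\sum_j bb j)%N = s.

(* the row selected by column y (dtot dd, i.e. no row, outside the groups) *)
Definition sel_row (y : nat) : nat :=
  if [pick j : 'I_r | (coff bb j <= y < coff bb j + bb j)%N] is Some j
  then (roff dd (kk j) + (y - coff bb j))%N else dtot dd.

Definition selmx : 'M[R]_(dtot dd, s) := \matrix_(x, y) ((x : nat) == sel_row y)%:R.

Lemma sel_row_at j o : (o < bb j)%N -> sel_row (coff bb j + o) = (roff dd (kk j) + o)%N.
Proof.
move=> lt_o; rewrite /sel_row; case: pickP => [j' /andP[le_j' lt_j'] | none].
  have lt_j'o : (coff bb j + o - coff bb j' < bb j')%N by rewrite ltn_subLR.
  have [<- e] := off_inj lt_j'o lt_o (subnKC le_j').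
  by rewrite e.
by have := none j; rewrite leq_addr ltn_add2l lt_o.
Qed.

Lemma sel_col_decomp (y : 'I_s) : exists j o, (o < bb j)%N /\ val y = (coff bb j + o)%N.
Proof.
have [j /andP[le_y lt_y]] := off_ex (w := bb) (y := y) ltac:(by rewrite bb_sum).
by exists j, (y - coff bb j)%N; rewrite ltn_subLR // subnKC.
Qed.

Lemma sel_row_lt (y : 'I_s) : (sel_row y < dtot dd)%N.
Proof.
have [j [o [lt_o ->]]] := sel_col_decomp y.
by rewrite sel_row_at //; apply: off_lt_tot; apply: leq_trans (bb_le j).
Qed.

Lemma sel_row_inj : injective (fun y : 'I_s => sel_row y).
Proof.
move=> y1 y2 /=.
have [j1 [o1 [lt1 e1]]] := sel_col_decomp y1.
have [j2 [o2 [lt2 e2]]] := sel_col_decomp y2.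
rewrite e1 e2 !sel_row_at // => e.
have [/(incr_inj kk_incr) ej eo] :=
  off_inj (leq_trans lt1 (bb_le j1)) (leq_trans lt2 (bb_le j2)) e.
by apply/val_inj; rewrite e1 e2 ej eo.
Qed.

(* the columns of selmx are distinct unit vectors, so selmx^T selmx = 1 *)
Lemma selmx_rank : \rank selmx = s.
Proof.
apply/eqP; rewrite eqn_leq rank_leq_col /=.
have orth : selmx^T *m selmx = 1%:M.
  apply/matrixP => y1 y2; rewrite !mxE (bigD1 (Ordinal (sel_row_lt y1))) //=.
  rewrite big1 ?addr0 => [|x ne_x]; last first.
    rewrite !mxE; case: eqP => [ex|]; last by rewrite mul0r.
    by case/eqP: ne_x; apply/val_inj.
  by rewrite !mxE eqxx mul1r /= (inj_eq sel_row_inj).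
by rewrite -[X in (X <= _)%N](mxrank1 R s) -orth mxrankM_maxr.
Qed.

Lemma selmx_blockE i j (a : 'I_(dd i)) (c : 'I_(bb j)) :
  bce_block bb selmx i j a c = ((roff dd i + a)%N == (roff dd (kk j) + c)%N)%:R.
Proof.
have lt_row : (roff dd i + a < dtot dd)%N by apply: off_lt_tot.
have lt_col : (coff bb j + c < s)%N by rewrite -bb_sum; apply: off_lt_tot.
by rewrite mxE (mxentryE _ lt_row lt_col) mxE /= sel_row_at.
Qed.

Lemma selmx_block_off i j : i != kk j -> bce_block bb selmx i j = 0.
Proof.
move=> ne_i; apply/matrixP => a c; rewrite selmx_blockE mxE.
case: eqP => // e; have [ei _] := off_inj (ltn_ord a) (leq_trans (ltn_ord c) (bb_le j)) e.
by rewrite ei eqxx in ne_i.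
Qed.

Lemma selmx_block_lead j : bce_block bb selmx (kk j) j = pid_mx (bb j).
Proof.
apply/matrixP => a c; rewrite selmx_blockE !mxE eqn_add2l.
by case: eqP => //= ->; rewrite ltn_ord.
Qed.

Lemma selmx_bce : (forall j, bb j = 1%N \/ bb j = 2%N) -> is_bce selmx bb kk.
Proof.
move=> b12; split=> // [j i lt_i | j].
  by apply: selmx_block_off; rewrite neq_ltn lt_i.
by rewrite selmx_block_lead rank_pid_mx.
Qed.

End Selection.

Lemma enum_val_incr (k : nat) (P : {set 'I_k}) (j1 j2 : 'I_#|P|) :
  (j1 < j2)%N -> (enum_val j1 < enum_val j2)%N.
Proof.
move=> lt_j.
have srt : sorted ltn [seq val i | i <- enum P].
  have -> : enum P = filter (mem P) (enum 'I_k) by rewrite enumT.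
  rewrite sorted_map; apply: sorted_filter; first exact: ltn_trans.
  by rewrite -sorted_map val_enum_ord iota_ltn_sorted.
have nthE (j : 'I_#|P|) : val (enum_val j) = nth 0%N [seq val i | i <- enum P] j.
  by rewrite (nth_map (enum_val j1)) -?cardE // -enum_val_nth.
by rewrite !nthE; apply: (sorted_ltn_nth ltn_trans); rewrite // inE size_map -cardE.
Qed.

Lemma imset_enum_val (T : finType) (P : {set T}) (Q : pred T) :
  [set enum_val j | j : 'I_#|P| & Q (enum_val j)] = [set i in P | Q i].
Proof.
apply/setP => i; rewrite inE; apply/imsetP/andP => [[j] | [iP Qi]].
  by rewrite inE => Qj ->; rewrite enum_valP.
by exists (enum_rank_in iP i); rewrite ?inE enum_rankK_in.
Qed.

Lemma weighted_blocks_bce (R : realType) k (dd : 'I_k -> nat) s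
    (P : {set 'I_k}) (c : 'I_k -> nat) :
  (forall i, i \in P -> (c i = 1%N \/ c i = 2%N) /\ (c i <= dd i)%N) ->
  (\sum_(i in P) c i)%N = s ->
  exists (W : 'M[R]_(dtot dd, s)) (r : nat) (bb : 'I_r -> nat) (kk : 'I_r -> 'I_k),
    \rank W = s /\ is_bce W bb kk /\
    [set kk j | j : 'I_r & (bb j == 1%N) && (dd (kk j) == 2%N)] =
    [set i in P | (c i == 1%N) && (dd i == 2%N)].
Proof.
move=> cP sum_c.
pose kk (j : 'I_#|P|) : 'I_k := enum_val j.
pose bb j := c (kk j).
have bb_sum : (\sum_j bb j)%N = s by rewrite -sum_c [RHS]big_enum_val.
have bb_le j : (bb j <= dd (kk j))%N by case: (cP _ (enum_valP j)).
exists (@selmx R _ dd s _ bb kk), #|P|, bb, kk.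
have kk_incr : forall j1 j2 : 'I_#|P|, (j1 < j2)%N -> (kk j1 < kk j2)%N := @enum_val_incr k P.
split; first exact: selmx_rank kk_incr bb_le bb_sum.
split; last exact: imset_enum_val.
by apply: (selmx_bce R kk_incr bb_le bb_sum) => j; case: (cP _ (enum_valP j)).
Qed.

Lemma block_counts k (dd : 'I_k -> nat) :
  (forall i, dd i = 1%N \/ dd i = 2%N) ->
  (#|[set i | dd i == 1%N]| + #|JC dd|)%N = k /\
  dtot dd = (#|[set i | dd i == 1%N]| + 2 * #|JC dd|)%N.
Proof.
move=> dd12; split.
  rewrite -[RHS]card_ord -(cardsC (JC dd)) addnC; congr (_ + _)%N; apply: eq_card => i.
  by rewrite !inE; case: (dd12 i) => ->.
rewrite /dtot -!sum1_card big_distrr /= [X in (X + _)%N]big_mkcond.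
rewrite [X in (_ + X)%N]big_mkcond -big_split /=.
by apply: eq_bigr => i _; rewrite !inE; case: (dd12 i) => ->.
Qed.

Lemma exists_subset_card (T : finType) (X : {set T}) m :
  (m <= #|X|)%N -> exists Y : {set T}, Y \subset X /\ #|Y| = m.
Proof.
elim: m => [|m IH] le_m; first by exists set0; rewrite sub0set cards0.
have [Y [YX cardY]] := IH (ltnW le_m).
have : (0 < #|X :\: Y|)%N by rewrite cardsD (setIidPr YX) cardY subn_gt0.
case/card_gt0P => x; rewrite in_setD => /andP[xY xX].
exists (x |: Y); split; first by rewrite subUset sub1set xX YX.
by rewrite cardsU1 xY cardY.
Qed.

Lemma split_dimension (x C j s : nat) :
  (j <= C)%N -> (j <= s)%N -> (s + j <= x + 2 * C)%N ->
  (x = 0%N -> ~~ odd (s - j)) ->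
  exists a b, [/\ (a <= x)%N, (b <= C - j)%N & (j + a + 2 * b)%N = s].
Proof.
move=> le_jC le_js le_d par.
have half := odd_double_half (s - j); rewrite -muln2 in half.
exists (s - j - 2 * minn (s - j)./2 (C - j))%N, (minn (s - j)./2 (C - j)).
split; [|exact: geq_minr|].
- have [x0|x_pos] := posnP x; last by move: half; case: odd => /=; lia.
  by move: half (par x0); case: odd => /=; lia.
- by move: half; case: odd => /=; lia.
Qed.

Lemma union_weights k (dd : 'I_k -> nat) (J A B : {set 'I_k}) :
  (forall i, dd i = 1%N \/ dd i = 2%N) ->
  (forall i, i \in J -> dd i = 2%N /\ i \notin B) ->
  (forall i, i \in A -> dd i = 1%N /\ i \notin B) ->
  (forall i, i \in B -> dd i = 2%N) ->
  let c i := if i \in B then 2%N else 1%N in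
  [/\ forall i, i \in J :|: A :|: B -> (c i = 1%N \/ c i = 2%N) /\ (c i <= dd i)%N,
      (\sum_(i in J :|: A :|: B) c i = #|J| + #|A| + 2 * #|B|)%N
    & [set i in J :|: A :|: B | (c i == 1%N) && (dd i == 2%N)] = J].
Proof.
move=> dd12 inJ inA inB c.
have disJA : [disjoint J & A].
  by apply/pred0P => i /=; apply/negP => /andP[/inJ[dd2 _] /inA[]]; rewrite dd2.
have disJAB : [disjoint J :|: A & B].
  by apply/pred0P => i /=; apply/negP => /andP[/setUP[/inJ | /inA][_ /negP]].
split.
- move=> i _; rewrite /c; case: ifP => [/inB -> | _]; first by split; [right|].
  by split; [left | case: (dd12 i) => ->].
- rewrite (eq_bigl [predU J :|: A & B]) => [|i]; last by rewrite !inE.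
  rewrite bigU // (eq_bigl [predU J & A]) => [|i]; last by rewrite !inE.
  rewrite bigU //; congr (_ + _ + _)%N.
  + by rewrite -sum1_card; apply: eq_bigr => i /inJ[_ /negbTE]; rewrite /c /= => ->.
  + by rewrite -sum1_card; apply: eq_bigr => i /inA[_ /negbTE]; rewrite /c /= => ->.
  + rewrite (eq_bigr (fun=> 2%N)) => [|i iB]; last by rewrite /c /= iB.
    by rewrite sum_nat_const mulnC.
- apply/setP => i; rewrite !inE /c; case: (boolP (i \in J)) => [/inJ[-> /negbTE ->] | niJ] //=.
  case: (boolP (i \in B)) => [/inB | _]; first by rewrite andbF.
  by case: (boolP (i \in A)) => // /inA[->].
Qed.

Lemma calJ_weighted_blocks k (dd : 'I_k -> nat) s (J : {set 'I_k}) :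
  (forall i, dd i = 1%N \/ dd i = 2%N) -> (1 <= s <= dtot dd)%N -> calJ dd s J ->
  exists (P : {set 'I_k}) (c : 'I_k -> nat),
    [/\ forall i, i \in P -> (c i = 1%N \/ c i = 2%N) /\ (c i <= dd i)%N,
        (\sum_(i in P) c i)%N = s
      & [set i in P | (c i == 1%N) && (dd i == 2%N)] = J].
Proof.
move=> dd12 /andP[_ le_sd] /and3P[JJC le_min par].
pose X1 := [set i | dd i == 1%N].
have [cardk cardd] := block_counts dd12.
have [a [b [le_a le_b sum_ab]]] : exists a b,
    [/\ (a <= #|X1|)%N, (b <= #|JC dd| - #|J|)%N & (#|J| + a + 2 * b)%N = s].
  apply: split_dimension; first exact: subset_leq_card.
  - by move: le_min; rewrite leq_min => /andP[].
  - by move: le_min; rewrite leq_min leq_subRL // cardd => /andP[].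
  - by move=> X1_0; apply/(implyP par)/eqP; move: cardk; rewrite X1_0.
have [A [AX1 cardA]] := exists_subset_card le_a.
have [B [BJ cardB]] : exists B : {set 'I_k}, B \subset JC dd :\: J /\ #|B| = b.
  by apply: exists_subset_card; rewrite cardsD (setIidPr JJC).
have inJ i : i \in J -> dd i = 2%N /\ i \notin B.
  move=> iJ; move/subsetP: JJC => /(_ i iJ); rewrite inE => /eqP ->; split=> //.
  by apply/negP => /(subsetP BJ); rewrite !inE iJ.
have inA i : i \in A -> dd i = 1%N /\ i \notin B.
  move=> /(subsetP AX1); rewrite inE => /eqP dd1; split=> //.
  by apply/negP => /(subsetP BJ); rewrite !inE dd1 andbF.
have inB i : i \in B -> dd i = 2%N by move=> /(subsetP BJ); rewrite !inE => /andP[_ /eqP].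
have [cP sum_c eJ] := union_weights dd12 inJ inA inB.
exists (J :|: A :|: B), (fun i => if i \in B then 2%N else 1%N).
by split=> //; rewrite sum_c cardA cardB.
Qed.

Unset Implicit Arguments.

Theorem lemma4p13 (R : realType) (k : nat) (dd : 'I_k -> nat) (s : nat)
    (J : {set 'I_k}) :
  (forall i, dd i = 1%N \/ dd i = 2%N) ->
  (1 <= s <= dtot dd)%N ->
  J \subset JC dd ->
  calJ dd s J <->
  exists V : 'M[R]_(dtot dd),
    \rank V = s /\
    exists (W : 'M[R]_(dtot dd, s)) (r : nat) (bb : 'I_r -> nat) (kk : 'I_r -> 'I_k),
      (W^T == V)%MS /\ is_bce W bb kk /\
      [set kk j | j : 'I_r & (bb j == 1%N) && (dd (kk j) == 2%N)] = J.
Proof.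
move=> dd12 s_range _; split.
  move=> JcalJ.
  have [P [c [cP sum_c <-]]] := calJ_weighted_blocks dd12 s_range JcalJ.
  have [W [r [bb [kk [rkW [bceW eJ]]]]]] := weighted_blocks_bce R cP sum_c.
  exists (<<W^T>>%MS); split; first by rewrite genmxE mxrank_tr.
  exists W, r, bb, kk; rewrite eJ; split=> //.
  by apply/eqmxP/eqmx_sym/genmxE.
case=> V [_ [W [r [bb [kk [_ [bceW <-]]]]]]].
exact: bce_calJ dd12 bceW.
Qed.
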